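(* For $n \geq 3$, the cycle $C_n$ is diametrical (i.e. $\Gamma_b(C_n) = \mathrm{diam}(C_n)$) if and only if $n \in \{3,4,5\}$.
   Context: Let $G=(V,E)$ be a finite connected graph with distance $d(u,v)$, eccentricity $e(v)=\max_w d(v,w)$ and diameter $\mathrm{diam}(G)=\max_v e(v)$. A broadcast is a function $f: V\to\{0,\dots,\mathrm{diam}(G)\}$ with $f(v)\le e(v)$; its cost is $\sum_v f(v)$; it is dominating if every $u$ has some $v$ with $f(v)\ge 1$ and $d(u,v)\le f(v)$; a dominating broadcast is minimal if decreasing $f(v)$ for any $v$ with $f(v)>0$ destroys domination. $\Gamma_b(G)$ is the maximum cost of a minimal dominating broadcast, and $G$ is called diametrical if $\Gamma_b(G)=\mathrm{diam}(G)$. *)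

From mathcomp Require Import all_boot.
Set Implicit Arguments. Unset Strict Implicit. Unset Printing Implicit Defensive.

Section Broadcast.
Variables (T : finType) (e : rel T).

Definition ball (k : nat) (u : T) : {set T} :=
  iter k (fun S => S :|: [set y | [exists x in S, e x y]]) [set u].

(* graph distance: least k with v in ball k u (for a connected graph this is
   < #|T|; the value #|T| only arises for disconnected pairs) *)
Definition dist (u v : T) : nat :=
  find (fun k => v \in ball k u) (iota 0 #|T|).

Definition ecc (v : T) : nat := \max_(w : T) dist v w.
Definition diam : nat := \max_(v : T) ecc v.

Definition connectedb : bool := [forall u, forall v, v \in ball #|T| u].

Definition is_broadcast (f : T -> nat) : bool :=
  [forall v, (f v <= diam) && (f v <= ecc v)].

Definition cost (f : T -> nat) : nat := \sum_(v : T) f v.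

Definition dominating (f : T -> nat) : bool :=
  [forall u, exists v, (1 <= f v) && (dist u v <= f v)].

Definition update (f : T -> nat) (v : T) (k : nat) : T -> nat :=
  fun w => if w == v then k else f w.

Definition minimal_dominating (f : T -> nat) : bool :=
  [&& is_broadcast f, dominating f &
      [forall v, forall k : 'I_(f v), ~~ dominating (update f v k)]].

(* Broadcast values are at most ecc v < #|T| in a connected graph, so
   ranging over functions T -> 'I_(#|T|.+1) covers all broadcasts. *)
Definition Gamma_b : nat :=
  \max_(f : {ffun T -> 'I_(#|T|.+1)} | minimal_dominating (fun v => nat_of_ord (f v)))
     cost (fun v => nat_of_ord (f v)).

Definition diametrical : Prop := Gamma_b = diam.

End Broadcast.

Definition cycle_rel (n : nat) : rel 'I_n :=
  fun i j => (val j == (val i).+1 %% n) || (val i == (val j).+1 %% n).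
Arguments cycle_rel n : clear implicits.

From mathcomp Require Import all_boot zify.
From Stdlib Require Import FunctionalExtensionality.
Set Implicit Arguments. Unset Strict Implicit. Unset Printing Implicit Defensive.

(* Every vertex of C_n has eccentricity n/2, so diam = n/2 and one vertex
   broadcasting at strength n/2 is a minimal dominating broadcast of cost
   diam.  For n >= 6, let a = (n-2)/2: two vertices at distance n-1-2a (that
   is, 1 or 2) broadcasting at strength a cover the cycle, and each has a
   private vertex at distance a on its far side; this minimal dominating
   broadcast costs 2a > n/2.  For n <= 5 the bound Gamma_b <= n/2 is checked
   by enumerating all broadcasts. *)

Section MinimalBroadcasts.
Variables (T : finType) (e : rel T).

Lemma not_dominating_of_far (h : T -> nat) (u : T) :
  (forall w, 0 < h w -> h w < dist e u w) -> ~~ dominating e h.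
Proof.
move=> far; apply/forallP => /(_ u) /existsP [w /andP [hw0 duw]].
by have := far w hw0; rewrite ltnNge duw.
Qed.

Lemma minimal_dominating_of_private (f : T -> nat) :
  is_broadcast e f -> dominating e f ->
  (forall v, 0 < f v -> exists u,
     f v <= dist e u v /\ forall w, w != v -> 0 < f w -> f w < dist e u w) ->
  minimal_dominating e f.
Proof.
move=> bf df priv; apply/and3P; split => //.
apply/forallP => v; apply/forallP => k.
have [u [fv_le far]] := priv v (leq_ltn_trans (leq0n k) (ltn_ord k)).
apply: (not_dominating_of_far (u := u)) => w; rewrite /update.
case: eqP => [-> _ | /eqP /far]; last exact.
exact: leq_trans (ltn_ord k) fv_le.
Qed.

Lemma cost_le_Gamma_b (g : T -> nat) :
  (forall v, g v <= #|T|) -> minimal_dominating e g -> cost g <= Gamma_b e.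
Proof.
move=> g_le mdg.
pose F := [ffun v => inord (g v) : 'I_#|T|.+1].
have gF : g = (fun v => nat_of_ord (F v)).
  by apply: functional_extensionality => v; rewrite ffunE inordK ?ltnS.
by rewrite gF in mdg *; apply: leq_bigmax_cond.
Qed.

Lemma Gamma_b_le k :
  (forall g : T -> nat, (forall v, g v <= #|T|) ->
     minimal_dominating e g -> cost g <= k) ->
  Gamma_b e <= k.
Proof. by move=> H; apply/bigmax_leqP => F /H; apply=> v; rewrite -ltnS ltn_ord. Qed.

End MinimalBroadcasts.

(* Arithmetic model of C_n on nat, avoiding [%% n] so that [lia] applies:
   [arc n u v] is the length of the arc from u forward to v. *)
Definition arc n u v := if u <= v then v - u else v + n - u.
Definition cdist n u v := minn (arc n u v) (arc n v u).
Definition csucc n x := if x.+1 == n then 0 else x.+1.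
Definition cadj n x y := (y == csucc n x) || (x == csucc n y).

Ltac cycle_arith :=
  unfold cadj, cdist, csucc, arc in *;
  repeat match goal with
  | |- context [if ?b then _ else _] => let E := fresh "E" in destruct b eqn:E
  | H : context [if ?b then _ else _] |- _ => let E := fresh "E" in destruct b eqn:E
  end; lia.

Section CycleDistance.
Variable n : nat.

Lemma cycle_relE (x y : 'I_n) : cycle_rel n x y = cadj n x y.
Proof.
have succE z : z < n -> z.+1 %% n = csucc n z.
  move=> zn; rewrite /csucc; case: eqP => [->|zSn]; first by rewrite modnn.
  by rewrite modn_small //; lia.
by rewrite /cycle_rel !succE ?ltn_ord.
Qed.

Lemma cdist_le0 u v : u < n -> v < n -> (cdist n u v <= 0) = (v == u).
Proof. by move=> un vn; apply/idP/eqP; cycle_arith. Qed.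

Lemma cdist_adj_le u x v k : u < n -> x < n -> v < n ->
  cdist n u x <= k -> cadj n x v -> cdist n u v <= k.+1.
Proof. by move=> un xn vn ux /orP [] /eqP xv; cycle_arith. Qed.

Lemma cdist_predecessor u v k : u < n -> v < n -> cdist n u v = k.+1 ->
  exists2 x, x < n & cdist n u x <= k /\ cadj n x v.
Proof.
move=> un vn uv; have [fwd | bwd] := leqP (arc n u v) (arc n v u).
- exists (if v == 0 then n.-1 else v.-1); first by cycle_arith.
  by split; [move: uv fwd | apply/orP; left; apply/eqP]; cycle_arith.
- exists (csucc n v); first by cycle_arith.
  by split; [move: uv bwd | apply/orP; right; apply/eqP]; cycle_arith.
Qed.

Lemma cdist_le_half u v : u < n -> v < n -> cdist n u v <= n./2.
Proof. by move=> un vn; cycle_arith. Qed.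

Lemma ball_cycle (u : 'I_n) k :
  ball (cycle_rel n) k u = [set v : 'I_n | cdist n u v <= k].
Proof.
elim: k => [|k IH]; first by apply/setP => v; rewrite /ball /= !inE cdist_le0.
rewrite /ball iterS -/(ball _ k u) IH; apply/setP => v; rewrite !inE.
apply/idP/idP.
- case/orP => [uv_le | /existsP [x /andP []]]; first exact: leq_trans uv_le _.
  by rewrite inE cycle_relE; apply: cdist_adj_le.
- move=> uv_le; have [uv_le_k | uv_gt] := leqP (cdist n u v) k; first by apply/orP; left.
  have [x xn [ux xv]] : exists2 x, x < n & cdist n u x <= k /\ cadj n x v.
    by apply: cdist_predecessor => //; lia.
  by apply/orP; right; apply/existsP; exists (Ordinal xn); rewrite inE ux cycle_relE.
Qed.

Lemma find_iota_leq c N : c < N -> find (fun k => c <= k) (iota 0 N) = c.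
Proof.
move=> cN; rewrite -(subnKC (ltnW cN)) iotaD find_cat.
have -> : has (fun k => c <= k) (iota 0 c) = false.
  by apply/hasPn => k; rewrite mem_iota -ltnNge.
have [d ->] : exists d, N - c = d.+1 by exists (N - c).-1; lia.
by rewrite /= add0n leqnn size_iota addn0.
Qed.

Lemma dist_cycle (u v : 'I_n) : dist (cycle_rel n) u v = cdist n u v.
Proof.
rewrite /dist card_ord (@eq_find _ _ (fun k => cdist n u v <= k)).
  by apply: find_iota_leq; have := ltn_ord u; have := ltn_ord v; cycle_arith.
by move=> k; rewrite ball_cycle inE.
Qed.

Lemma ecc_cycle (v : 'I_n) : ecc (cycle_rel n) v = n./2.
Proof.
apply/eqP; rewrite eqn_leq; apply/andP; split.
  by apply/bigmax_leqP => w _; rewrite dist_cycle cdist_le_half.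
have vn := ltn_ord v.
have wn : (if v + n./2 < n then v + n./2 else v + n./2 - n) < n by cycle_arith.
by apply: leq_trans (leq_bigmax (Ordinal wn)); rewrite dist_cycle /=; cycle_arith.
Qed.

Lemma diam_cycle : 0 < n -> diam (cycle_rel n) = n./2.
Proof.
move=> n0; apply/eqP; rewrite eqn_leq; apply/andP; split.
  by apply/bigmax_leqP => w _; rewrite ecc_cycle.
by apply: leq_trans (leq_bigmax (Ordinal n0)); rewrite ecc_cycle.
Qed.

End CycleDistance.

Lemma is_broadcast_cycle n (g : 'I_n -> nat) :
  0 < n -> (forall v, g v <= n./2) -> is_broadcast (cycle_rel n) g.
Proof. by move=> n0 g_le; apply/forallP => v; rewrite diam_cycle // ecc_cycle g_le. Qed.

Definition point_broadcast n r (w : 'I_n) := if w == 0 :> nat then r else 0.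

Definition pair_broadcast n a m (w : 'I_n) :=
  if (w == 0 :> nat) || (w == m :> nat) then a else 0.

Arguments point_broadcast : clear implicits.
Arguments pair_broadcast : clear implicits.

Lemma minimal_dominating_point_broadcast n :
  1 < n -> minimal_dominating (cycle_rel n) (point_broadcast n n./2).
Proof.
move=> n2; have n0 : 0 < n by lia.
have far : n./2 < n by lia.
apply: minimal_dominating_of_private.
- by apply: is_broadcast_cycle => // w; rewrite /point_broadcast; case: ifP.
- apply/forallP => u; apply/existsP; exists (Ordinal n0).
  by rewrite dist_cycle /point_broadcast /= cdist_le_half // andbT; lia.
- move=> v; rewrite /point_broadcast; case: ifP => // /eqP v0 _.
  exists (Ordinal far); split; first by rewrite dist_cycle /= v0; cycle_arith.
  move=> w wv; case: ifP => // /eqP w0.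
  by rewrite -(inj_eq (@ord_inj n)) /= w0 v0 eqxx in wv.
Qed.

Lemma minimal_dominating_pair_broadcast n a m :
  0 < a -> 0 < m <= a.*2.+1 -> n = m + a.*2.+1 ->
  minimal_dominating (cycle_rel n) (pair_broadcast n a m).
Proof.
move=> a0 /andP [m0 m_le] n_def.
have n0 : 0 < n by lia.
have mn : m < n by lia.
have far0 : n - a < n by lia.
have farm : m + a < n by lia.
apply: minimal_dominating_of_private.
- by apply: is_broadcast_cycle => // w; rewrite /pair_broadcast; case: ifP; lia.
- apply/forallP => u; apply/existsP; have un := ltn_ord u.
  have [near0 | nearm] := boolP ((u <= a) || (n - a <= u)).
    exists (Ordinal n0); rewrite dist_cycle /pair_broadcast /=.
    by apply/andP; split; [lia | move: near0; cycle_arith].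
  exists (Ordinal mn); rewrite dist_cycle /pair_broadcast /= eqxx orbT.
  by apply/andP; split; [lia | move: nearm; cycle_arith].
- move=> v; rewrite /pair_broadcast; case: ifP => // /orP [] /eqP v_val _.
  + exists (Ordinal far0); split; first by rewrite dist_cycle /= v_val; cycle_arith.
    move=> w wv; case: ifP => // /orP [] /eqP w_val _.
      by rewrite -(inj_eq (@ord_inj n)) /= w_val v_val eqxx in wv.
    by rewrite dist_cycle /= w_val; cycle_arith.
  + exists (Ordinal farm); split; first by rewrite dist_cycle /= v_val; cycle_arith.
    move=> w wv; case: ifP => // /orP [] /eqP w_val _.
      by rewrite dist_cycle /= w_val; cycle_arith.
    by rewrite -(inj_eq (@ord_inj n)) /= w_val v_val eqxx in wv.
Qed.

Lemma Gamma_b_cycle_ge_half n : 1 < n -> n./2 <= Gamma_b (cycle_rel n).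
Proof.
move=> n2; have n0 : 0 < n by lia.
have -> : n./2 = cost (point_broadcast n n./2).
  rewrite /cost (bigD1 (Ordinal n0)) //= big1 ?addn0 // => w w0.
  by rewrite /point_broadcast ifF //; apply: contraNF w0 => /eqP w_0; apply/eqP/ord_inj.
apply: cost_le_Gamma_b; last exact: minimal_dominating_point_broadcast.
by move=> w; rewrite card_ord /point_broadcast; case: ifP; lia.
Qed.

Lemma Gamma_b_cycle_gt_half n : 5 < n -> n./2 < Gamma_b (cycle_rel n).
Proof.
move=> n6; set a := (n - 2)./2; set m := n - 1 - a.*2.
have a_def : a = (n - 2)./2 by []; have m_def : m = n - 1 - a.*2 by [].
clearbody a m.
have n0 : 0 < n by lia.
have mn : m < n by lia.
have cost_pair : cost (pair_broadcast n a m) = a.*2.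
  have m0 : Ordinal mn != Ordinal n0 by rewrite -(inj_eq (@ord_inj n)) /=; lia.
  rewrite /cost (bigD1 (Ordinal n0)) //= (bigD1 (Ordinal mn)) //= big1.
    by rewrite /pair_broadcast /= eqxx orbT; lia.
  move=> w /andP [w0 wm]; rewrite /pair_broadcast ifF //.
  by rewrite -!(inj_eq (@ord_inj n)) /= in w0 wm; rewrite (negbTE w0) (negbTE wm).
suff : cost (pair_broadcast n a m) <= Gamma_b (cycle_rel n) by lia.
apply: cost_le_Gamma_b; last by apply: minimal_dominating_pair_broadcast; lia.
by move=> w; rewrite card_ord /pair_broadcast; case: ifP; lia.
Qed.

Definition cdominating n (G : nat -> nat) :=
  all (fun u => has (fun v => (0 < G v) && (cdist n u v <= G v)) (iota 0 n))
      (iota 0 n).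

Definition cminimal_dominating n (G : nat -> nat) :=
  cdominating n G &&
  all (fun v => all (fun k => ~~ cdominating n (fun w => if w == v then k else G w))
                   (iota 0 (G v)))
      (iota 0 n).

Lemma dominating_cycleE n (g : 'I_n -> nat) (G : nat -> nat) :
  (forall i : 'I_n, G i = g i) -> dominating (cycle_rel n) g = cdominating n G.
Proof.
move=> Gg; apply/forallP/allP => [dom u | cdom u].
- rewrite mem_iota => /andP [_ un].
  have /existsP [v] := dom (Ordinal un); rewrite dist_cycle => uv.
  by apply/hasP; exists (nat_of_ord v); rewrite ?mem_iota ?ltn_ord ?Gg.
- move: (cdom u); rewrite mem_iota ltn_ord => /(_ isT) /hasP [v].
  rewrite mem_iota => /andP [_ vn] uv; apply/existsP; exists (Ordinal vn).
  by rewrite dist_cycle -Gg.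
Qed.

Lemma minimal_dominating_cycle n (g : 'I_n -> nat) (G : nat -> nat) :
  (forall i : 'I_n, G i = g i) ->
  minimal_dominating (cycle_rel n) g -> cminimal_dominating n G.
Proof.
move=> Gg /and3P [_ dom min]; rewrite /cminimal_dominating -(dominating_cycleE Gg) dom.
apply/allP => v; rewrite mem_iota => /andP [_ vn].
apply/allP => k; rewrite mem_iota (Gg (Ordinal vn)) => /andP [_ kv].
rewrite -(@dominating_cycleE _ (update g (Ordinal vn) k)).
  exact: forallP (forallP min (Ordinal vn)) (Ordinal kv).
by move=> i; rewrite /update Gg -(inj_eq (@ord_inj n)).
Qed.

Fixpoint bounded_seqs (len m : nat) : seq (seq nat) :=
  if len is len'.+1 then [seq x :: s | x <- iota 0 m, s <- bounded_seqs len' m]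
  else [:: [::]].

Lemma mem_bounded_seqs len m s :
  size s = len -> all (fun x => x < m) s -> s \in bounded_seqs len m.
Proof.
elim: len s => [|len IH] [|x s] //= [size_s] /andP [xm sm].
by apply: (allpairs_f (fun x s => x :: s)); rewrite ?mem_iota ?IH.
Qed.

Definition cycle_Gamma_b_le_half n :=
  all (fun s => cminimal_dominating n (nth 0 s) ==> (sumn s <= n./2))
      (bounded_seqs n n.+1).

Lemma Gamma_b_cycle_le_half n :
  cycle_Gamma_b_le_half n -> Gamma_b (cycle_rel n) <= n./2.
Proof.
move=> /allP check; apply: Gamma_b_le => g; rewrite card_ord => g_le md_g.
pose s := [seq g i | i <- enum 'I_n].
have sg (i : 'I_n) : nth 0 s i = g i.
  by rewrite (nth_map i) ?size_enum_ord ?ltn_ord // nth_ord_enum.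
have s_mem : s \in bounded_seqs n n.+1.
  apply: mem_bounded_seqs; first by rewrite size_map size_enum_ord.
  by apply/allP => _ /mapP [i _ ->]; rewrite ltnS.
have -> : cost g = sumn s by rewrite /cost sumnE big_map big_enum.
exact: implyP (check s s_mem) (minimal_dominating_cycle sg md_g).
Qed.

Lemma cycle_Gamma_b_le_half_small : all cycle_Gamma_b_le_half [:: 3; 4; 5].
Proof. by vm_compute. Qed.

Theorem mainTheorem12 (n : nat) : 3 <= n ->
  (diametrical (cycle_rel n) <-> n \in [:: 3; 4; 5]).
Proof.
move=> n3; rewrite /diametrical diam_cycle; last by lia.
split => [diametrical_n | small].
- case: (leqP 6 n) => [n6 | n_lt6]; last by rewrite !inE; lia.
  by have := Gamma_b_cycle_gt_half n6; rewrite diametrical_n ltnn.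
- apply/eqP; rewrite eqn_leq Gamma_b_cycle_ge_half ?andbT; last by lia.
  exact/Gamma_b_cycle_le_half/(allP cycle_Gamma_b_le_half_small).
Qed.
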